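(* Let $f:\mathbb{Z}^n\to\mathbb{R}\cup\{+\infty\}$ be an M-convex function. Let $y\in\operatorname{dom} f$ with $\phi(y)<0$, and let $i,j\in N$ be distinct with $f'(y;i,j)=\phi(y)$. Then $\phi(y+\chi_i-\chi_j)\ge\phi(y)$. Moreover, for all distinct $h,k\in N$ we have $f'(y+\chi_i-\chi_j;h,k)\ge\phi(y)$, and if equality holds then $f'(y+\chi_i-\chi_j;h,k)=\phi(y+\chi_i-\chi_j)$, i.e. $+\chi_h-\chi_k$ is a steepest descent direction at $y+\chi_i-\chi_j$.
   Context: $N=\{1,\dots,n\}$; $\chi_i\in\{0,1\}^n$ is the $i$-th unit vector. For $f:\mathbb{Z}^n\to\mathbb{R}\cup\{+\infty\}$, $\operatorname{dom} f=\{x\in\mathbb{Z}^n: f(x)<+\infty\}$. $f$ is M-convex if $\operatorname{dom} f\neq\emptyset$ and for all $x,y\in\operatorname{dom} f$ and every $i$ with $x(i)>y(i)$ there is $j$ with $x(j)<y(j)$ such that $f(x)+f(y)\ge f(x-\chi_i+\chi_j)+f(y+\chi_i-\chi_j)$. For $x\in\operatorname{dom} f$ and $i,j\in N$, $f'(x;i,j)=f(x+\chi_i-\chi_j)-f(x)$ (possibly $+\infty$; $f'(x;i,i)=0$), and $\phi(x)=\min_{i,j\in N}f'(x;i,j)$. A direction $+\chi_h-\chi_k$ is a steepest descent direction at $x$ if $f'(x;h,k)=\phi(x)$. *)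

From HB Require Import structures.
From mathcomp Require Import all_boot all_order all_algebra.
From mathcomp Require Import reals constructive_ereal.
Set Implicit Arguments. Unset Strict Implicit. Unset Printing Implicit Defensive.
Import Order.TTheory GRing.Theory Num.Theory.
Local Open Scope ring_scope.
Local Open Scope ereal_scope.

Definition chi (n : nat) (i : 'I_n) : 'I_n -> int := fun k => (k == i)%:Z.

Definition mv (n : nat) (x : 'I_n -> int) (i j : 'I_n) : 'I_n -> int :=
  fun k => (x k + chi i k - chi j k)%R.

(* f : Z^n -> R \cup {+oo}, modelled as f : Z^n -> \bar R never equal to -oo *)
Definition no_minf (R : realType) (n : nat) (f : ('I_n -> int) -> \bar R) :=
  forall x, f x != -oo.

Definition in_dom (R : realType) (n : nat) (f : ('I_n -> int) -> \bar R) x :=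
  f x < +oo.

Definition Mconvex (R : realType) (n : nat) (f : ('I_n -> int) -> \bar R) :=
  (exists x, in_dom f x) /\
  forall x y, in_dom f x -> in_dom f y ->
    forall i, (y i < x i)%R ->
      exists j, (x j < y j)%R /\
        f (mv x j i) + f (mv y i j) <= f x + f y.

Definition fder (R : realType) (n : nat) (f : ('I_n -> int) -> \bar R) x (i j : 'I_n) :=
  f (mv x i j) - f x.

Definition phi (R : realType) (n : nat) (f : ('I_n -> int) -> \bar R) x :=
  \big[Order.min/+oo]_(i < n) \big[Order.min/+oo]_(j < n) fder f x i j.

From HB Require Import structures.
From mathcomp Require Import all_boot all_order all_algebra.
From mathcomp Require Import reals constructive_ereal.
From mathcomp Require Import ring zify.
From mathcomp Require Import boolp.
Set Implicit Arguments. Unset Strict Implicit. Unset Printing Implicit Defensive.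
Import Order.TTheory GRing.Theory Num.Theory.
Local Open Scope ring_scope.
Local Open Scope ereal_scope.

(* Write z = y + chi_i - chi_j and w = z + chi_h - chi_k.  Every single move from y
   costs at least phi(y) <= 0.  If w(i) > y(i), the exchange axiom applied to w, y
   and i yields b in {j, k} with f(w) + f(y) >= f(w - chi_i + chi_b) + f(y + chi_i - chi_b),
   and both terms on the right are single moves from y, so f(w) >= f(y) + 2 phi(y);
   otherwise w is itself a single move from y.  As f(z) = f(y) + phi(y), this says
   f'(z;h,k) >= phi(y), whence phi(z) >= phi(y) and the equality case. *)

Section Moves.
Variable n : nat.
Implicit Types (x : 'I_n -> int) (i j h k : 'I_n).

Lemma mv_id x i : mv x i i = x.
Proof. by apply: funext => l; rewrite /mv addrK. Qed.

Lemma mvC x i j h k : mv (mv x i j) h k = mv (mv x h k) i j.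
Proof. by apply: funext => l; rewrite /mv; ring. Qed.

Lemma mv_trans x h k i : mv (mv x h k) k i = mv x h i.
Proof. by apply: funext => l; rewrite /mv; ring. Qed.

Lemma mv2_gt_at x i j h k : i != j -> i != k -> (x i < mv (mv x i j) h k i)%R.
Proof.
move=> ij ik; rewrite /mv /chi eqxx (negbTE ij) eq_sym (negbTE ik).
by case: (i == h); lia.
Qed.

Lemma mv2_lt_at x i j h k b : (mv (mv x i j) h k b < x b)%R -> (b == j) || (b == k).
Proof. by rewrite /mv /chi; case: (b == j); case: (b == k); case: (b == i); case: (b == h); lia. Qed.

End Moves.

Section Descent.
Variables (R : realType) (n : nat) (f : ('I_n -> int) -> \bar R).
Hypothesis hf : no_minf f.

Lemma phi_le_fder x a c : phi f x <= fder f x a c.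
Proof. by rewrite /phi (bigD1 a) //= ge_min (bigD1 c) //= ge_min lexx. Qed.

Lemma le_phi p x : (forall a c, p <= fder f x a c) -> p <= phi f x.
Proof.
move=> lep; apply: (big_ind (fun v => p <= v)) => [|u v pu pv|a _].
- exact: leey.
- by rewrite le_min pu pv.
apply: (big_ind (fun v => p <= v)) => [|u v pu pv|c _] //.
- exact: leey.
- by rewrite le_min pu pv.
Qed.

Lemma in_dom_fin {x} : in_dom f x -> f x \is a fin_num.
Proof. by move=> fx; rewrite fin_numE hf (lt_eqF fx). Qed.

Lemma le_fder x p a c : in_dom f x ->
  (p <= fder f x a c) = (f x + p <= f (mv x a c)).
Proof. by move=> /in_dom_fin fx; rewrite /fder leeBrDl. Qed.

Lemma Mconvex_mv2_ge y p i j h k : Mconvex f -> in_dom f y ->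
  (forall a c, p <= fder f y a c) -> f y + p + p <= f (mv (mv y i j) h k).
Proof.
move=> hM hy lep.
have fy := in_dom_fin hy.
have le1 a c : f y + p <= f (mv y a c) by rewrite -le_fder.
have p_le0 : p <= 0 by have := lep i i; rewrite /fder mv_id subee.
have le2 a c : f y + p + p <= f (mv y a c) by apply: le_trans (le1 a c); exact: geeDl.
have [-> | ij] := eqVneq i j; first by rewrite mv_id.
have [<- | ik] := eqVneq i k; first by rewrite mvC mv_trans.
set w := mv (mv y i j) h k.
have [wy | ] := ltP (f w) +oo; last by rewrite leye_eq => /eqP ->; exact: leey.
have [b [wb exch]] := hM.2 _ _ wy hy i (mv2_gt_at y h ij ik).
have [c wbi] : exists c, mv w b i = mv y h c.
  case/orP: (mv2_lt_at wb) => /eqP ->; rewrite /w.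
    by exists k; rewrite mvC mv_trans mv_id.
  by exists j; rewrite mv_trans mvC mv_trans.
rewrite -(leeD2rE _ _ fy) addeAC -addeA; apply: le_trans exch.
by rewrite wbi addeC; apply: leeD.
Qed.

End Descent.

Theorem mainTheorem1 (R : realType) (n : nat) (f : ('I_n -> int) -> \bar R)
  (hf : no_minf f) (hM : Mconvex f) (y : 'I_n -> int) (hy : in_dom f y)
  (hneg : phi f y < 0) (i j : 'I_n) (hij : i != j)
  (hsteep : fder f y i j = phi f y) :
  phi f y <= phi f (mv y i j) /\
  (forall h k : 'I_n, h != k ->
     phi f y <= fder f (mv y i j) h k /\
     (fder f (mv y i j) h k = phi f y ->
        fder f (mv y i j) h k = phi f (mv y i j))).
Proof.
have fy := in_dom_fin hf hy.
have fz : f (mv y i j) = f y + phi f y by rewrite -hsteep /fder addeC subeK.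
have hz : in_dom f (mv y i j).
  by rewrite /in_dom fz (lt_le_trans _ (leey (f y))) // gteDl.
have fder_ge h k : phi f y <= fder f (mv y i j) h k.
  by rewrite le_fder // fz Mconvex_mv2_ge // => a c; exact: phi_le_fder.
have phi_ge := le_phi fder_ge.
split=> // h k _; split=> // steep.
by apply/eqP; rewrite eq_le phi_le_fder andbT steep.
Qed.
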